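(* Let $\|\cdot\|_A$ be a norm on $\mathbb{R}^n$ that is decomposable with respect to $\mathcal{G}$. Then there exists a constant $f>0$, depending only on $n,k,\mathcal{G}$ and $\|\cdot\|_A$, such that for every $h\in\mathbb{R}^n$, every $\Lambda_0\in\mathrm{GkS}$, and every optimal group $k$-sparse decomposition $\Lambda_1,\ldots,\Lambda_s$ of $h_{\mathcal{N}\setminus\Lambda_0}$ with respect to $\|\cdot\|_A$, $$\sum_{j=2}^s\|h_{\Lambda_j}\|_2\le\frac1f\,\|h_{\mathcal{N}\setminus\Lambda_0}\|_A .$$
   Context: Fix positive integers $n,k$, let $\mathcal{N}=\{1,\ldots,n\}$ and let $\mathcal{G}=\{G_1,\ldots,G_g\}$ be a partition of $\mathcal{N}$ with $|G_i|\le k$ for all $i$. For $x\in\mathbb{R}^n$ and $\Lambda\subseteq\mathcal{N}$, $x_\Lambda$ is the vector with $(x_\Lambda)_i=x_i$ for $i\in\Lambda$ and $0$ otherwise; $\mathrm{supp}(u)=\{i:u_i\ne0\}$. For $S\subseteq\{1,\ldots,g\}$, $G_S=\bigcup_{i\in S}G_i$. A set $\Lambda\subseteq\mathcal{N}$ is group $k$-sparse if $\Lambda=G_S$ for some $S$ and $|\Lambda|\le k$; $\mathrm{GkS}$ denotes the collection of all group $k$-sparse sets. A norm $\|\cdot\|$ is decomposable with respect to $\mathcal{G}$ if $\|u+v\|=\|u\|+\|v\|$ whenever $\mathrm{supp}(u)\subseteq G_{S_u}$, $\mathrm{supp}(v)\subseteq G_{S_v}$ with $S_u\cap S_v=\emptyset$.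 Given $h$ and $\Lambda_0\in\mathrm{GkS}$, put $v=h_{\mathcal{N}\setminus\Lambda_0}$; an optimal group $k$-sparse decomposition of $v$ with respect to $\|\cdot\|_A$ is a sequence $\Lambda_1,\ldots,\Lambda_s$ of pairwise disjoint group $k$-sparse subsets of $\mathcal{N}\setminus\Lambda_0$ whose union is $\mathcal{N}\setminus\Lambda_0$ (so $v=\sum_{j=1}^s v_{\Lambda_j}$ and $v_{\Lambda_j}=h_{\Lambda_j}$), such that for each $i$, with $r_i=v-\sum_{j<i}v_{\Lambda_j}$, the set $\Lambda_i$ minimizes $\|r_i-(r_i)_\Lambda\|_A$ over group $k$-sparse $\Lambda\subseteq\mathcal{N}\setminus(\Lambda_0\cup\Lambda_1\cup\cdots\cup\Lambda_{i-1})$. An empty sum is $0$. *)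

From HB Require Import structures.
From mathcomp Require Import all_boot all_order all_algebra.
From mathcomp Require Import reals.
Set Implicit Arguments. Unset Strict Implicit. Unset Printing Implicit Defensive.
Import Order.TTheory GRing.Theory Num.Theory.
Local Open Scope ring_scope.

Section Defs.
Variables (R : realType) (n : nat).

Definition restrict (x : 'rV[R]_n) (A : {set 'I_n}) : 'rV[R]_n :=
  \row_i (if i \in A then x ord0 i else 0).

Definition supp (x : 'rV[R]_n) : {set 'I_n} := [set i | x ord0 i != 0].

Definition l2norm (x : 'rV[R]_n) : R := Num.sqrt (\sum_i x ord0 i ^+ 2).

Definition is_norm (nA : 'rV[R]_n -> R) : Prop :=
  [/\ forall x, 0 <= nA x,
      forall x, nA x = 0 -> x = 0,
      forall (a : R) x, nA (a *: x) = `|a| * nA x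
    & forall x y, nA (x + y) <= nA x + nA y].

(* P is the partition G of N = 'I_n (its blocks are the groups G_i).
   A is group k-sparse: A = G_S for some set S of groups, and |A| <= k. *)
Definition group_sparse (P : {set {set 'I_n}}) (k : nat) (A : {set 'I_n}) : Prop :=
  (exists2 S : {set {set 'I_n}}, S \subset P & A = cover S) /\ (#|A| <= k)%N.

Definition decomposable (P : {set {set 'I_n}}) (nA : 'rV[R]_n -> R) : Prop :=
  forall (u v : 'rV[R]_n) (Su Sv : {set {set 'I_n}}),
    Su \subset P -> Sv \subset P -> [disjoint Su & Sv] ->
    supp u \subset cover Su -> supp v \subset cover Sv ->
    nA (u + v) = nA u + nA v.

(* Ls = [:: Lambda_1; ...; Lambda_s] (0-based: nth set0 Ls j = Lambda_{j+1})
   is an optimal group k-sparse decomposition of v = h_{N \ L0} w.r.t. nA. *)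
Definition optimal_decomp (P : {set {set 'I_n}}) (k : nat) (nA : 'rV[R]_n -> R)
    (h : 'rV[R]_n) (L0 : {set 'I_n}) (Ls : seq {set 'I_n}) : Prop :=
  let v := restrict h (~: L0) in
  [/\ forall j, (j < size Ls)%N ->
        group_sparse P k (nth set0 Ls j) /\ nth set0 Ls j \subset ~: L0,
      forall i j, (i < j < size Ls)%N -> [disjoint nth set0 Ls i & nth set0 Ls j],
      \bigcup_(A <- Ls) A = ~: L0
    & forall i, (i < size Ls)%N ->
        let r := v - \sum_(0 <= j < i) restrict v (nth set0 Ls j) in
        let prev := L0 :|: \bigcup_(0 <= j < i) nth set0 Ls j in
        nth set0 Ls i \subset ~: prev /\
        forall A, group_sparse P k A -> A \subset ~: prev ->
          nA (r - restrict r (nth set0 Ls i)) <= nA (r - restrict r A)].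

End Defs.

From HB Require Import structures.
From mathcomp Require Import all_boot all_order all_algebra.
From mathcomp Require Import reals.
Import Order.TTheory GRing.Theory Num.Theory.
Local Open Scope ring_scope.
Set Implicit Arguments. Unset Strict Implicit. Unset Printing Implicit Defensive.

(* Since the Lambda_j are
   pairwise disjoint unions of groups covering N \ Lambda_0, decomposability
   gives ||h_{N \ Lambda_0}||_A = sum_j ||h_{Lambda_j}||_A, and each term
   dominates ||h_{Lambda_j}||_2 up to the constant of equivalence of the
   norms ||.||_2 and ||.||_A on R^n, obtained by compactness of the unit
   sphere. *)

Section NormFacts.
Variables (R : realType) (n : nat) (nA : 'rV[R]_n -> R).
Hypothesis nA_norm : is_norm nA.

Lemma is_norm_ge0 x : 0 <= nA x. Proof. by case: nA_norm. Qed.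

Lemma is_normD x y : nA (x + y) <= nA x + nA y. Proof. by case: nA_norm. Qed.

Lemma is_normZ a x : nA (a *: x) = `|a| * nA x. Proof. by case: nA_norm. Qed.

Lemma is_norm0 : nA 0 = 0.
Proof. by rewrite -(scale0r (0 : 'rV[R]_n)) is_normZ normr0 mul0r. Qed.

Lemma is_normN x : nA (- x) = nA x.
Proof. by rewrite -scaleN1r is_normZ normrN normr1 mul1r. Qed.

Lemma is_norm_sum (I : Type) (r : seq I) (F : I -> 'rV[R]_n) :
  nA (\sum_(i <- r) F i) <= \sum_(i <- r) nA (F i).
Proof.
elim/big_rec2: _ => [|i y z _ le_yz]; first by rewrite is_norm0.
by rewrite (le_trans (is_normD _ _)) // lerD2l.
Qed.

End NormFacts.

(* mathcomp-analysis is imported only inside this module: its notations for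
   classical sets clash with those of finset used by the statement. *)
Module NormEquivalence.
From mathcomp Require Import all_classical all_reals all_analysis lra.
Import numFieldNormedType.Exports.
Local Open Scope classical_set_scope.
Local Open Scope ring_scope.

Section Equivalence.
Variables (R : realType) (n : nat).

Lemma mx_norm_coord (x : 'rV[R]_n) i : `|x ord0 i| <= `|x|.
Proof.
rewrite -[`|x|]/(mx_norm x) mx_normrE.
exact: (le_bigmax _ (fun ij : 'I_1 * 'I_n => `|x ij.1 ij.2|) (ord0, i)).
Qed.

Lemma l2norm_le_mx_norm (x : 'rV[R]_n) : l2norm x <= n%:R * `|x|.
Proof.
have sum_le : \sum_i x ord0 i ^+ 2 <= (n%:R * `|x|) ^+ 2.
  apply: (@le_trans _ _ (\sum_(i < n) `|x| ^+ 2)).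
    apply: ler_sum => i _; rewrite -real_normK ?num_real //.
    by rewrite lerXn2r ?nnegrE ?mx_norm_coord.
  rewrite sumr_const card_ord exprMn -[leLHS]mulr_natl; apply: ler_wpM2r.
    exact: exprn_ge0.
  by rewrite -natrX ler_nat; case: (n) => // m; rewrite -mulnn leq_pmulr.
rewrite /l2norm (le_trans (ler_wsqrtr sum_le)) //.
by rewrite sqrtr_sqr ger0_norm // mulr_ge0.
Qed.

Variable nA : 'rV[R]_n -> R.
Hypothesis nA_norm : is_norm nA.

Lemma is_norm_le_mx_norm : exists2 C : R, 0 <= C & forall x, nA x <= C * `|x|.
Proof.
exists (\sum_(i < n) nA (delta_mx 0 i)).
  by rewrite sumr_ge0 // => i _; exact: is_norm_ge0.
move=> x; rewrite {1}(row_sum_delta x) mulr_suml.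
apply: le_trans (is_norm_sum nA_norm _ _) _; apply: ler_sum => i _.
rewrite is_normZ // mulrC ler_wpM2l //; [exact: is_norm_ge0|exact: mx_norm_coord].
Qed.

Lemma is_norm_continuous : continuous nA.
Proof.
have [C C0 le_nA] := is_norm_le_mx_norm.
have C1 : 0 < C + 1 by rewrite ltr_wpDl.
move=> x; apply/(@cvgrPdist_le _ _ _ (nbhs x) (nbhs_filter x)) => e e0.
near=> t.
have near_x : `|x - t| < e / (C + 1).
  near: t; apply/nbhs_ballP; exists (e / (C + 1)); first exact: divr_gt0.
  by move=> y; rewrite mx_norm_ball.
have nA_xt : nA (x - t) <= e.
  apply: le_trans (le_nA _) _.
  rewrite -[leRHS](@divfK _ (C + 1)) ?gt_eqF // [leRHS]mulrC.
  by apply: ler_pM => //; [rewrite lerDl | exact: ltW].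
have := is_normD nA_norm (x - t) t; rewrite subrK.
have := is_normD nA_norm (t - x) x; rewrite subrK -opprB is_normN //.
by rewrite ler_norml; lra.
Unshelve. all: by end_near.
Qed.

Lemma mx_norm_le_is_norm : exists2 m : R, 0 < m & forall x, m * `|x| <= nA x.
Proof.
have [n0|n_gt0] := posnP n.
  exists 1 => // x; rewrite (_ : x = 0) ?normr0 ?mulr0 ?is_norm_ge0 //.
  by apply/rowP => i; have := ltn_ord i; rewrite [X in (_ < X)%N]n0.
pose S := [set v : 'rV[R]_n | `|v| = 1].
have S_bounded : [bounded x | x in S].
  rewrite /bounded_near; near=> M => v /= ->.
  by near: M; apply: nbhs_pinfty_ge; rewrite num_real.
have S_compact : compact S.
  apply: bounded_closed_compact; first exact: S_bounded.
  apply: (@preimage_closed _ _ (@Num.norm _ 'rV[R]_n) [set r : R | r = 1]).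
    by move=> y _; exact: norm_continuous.
  exact: closed_eq.
have normalize x : x != 0 -> S (`|x|^-1 *: x).
  by move=> x0; rewrite /S /= normrZ normfV normr_id mulVf ?normr_eq0.
have S0 : S !=set0.
  pose e : 'rV[R]_n := const_mx 1.
  exists (`|e|^-1 *: e); apply: normalize.
  by apply/eqP => /rowP /(_ (Ordinal n_gt0)) /eqP; rewrite !mxE oner_eq0.
have [c Sc c_min] := EVT_min_rV S0 S_compact (continuous_subspaceT is_norm_continuous).
have c1 : `|c| = 1 by move: Sc; rewrite inE.
exists (nA c).
  rewrite lt_neqAle is_norm_ge0 // andbT eq_sym; apply/eqP.
  case: nA_norm => _ nA_eq0 _ _ /nA_eq0 c0.
  by move: c1; rewrite c0 normr0 => /eqP; rewrite eq_sym oner_eq0.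
move=> x; have [->|x0] := eqVneq x 0; first by rewrite normr0 mulr0 is_norm_ge0.
have := c_min _ (mem_set (normalize x x0)).
rewrite is_normZ // normfV normr_id => le_c.
have := ler_wpM2l (normr_ge0 x) le_c.
by rewrite mulrA mulfV ?normr_eq0 // mul1r mulrC.
Unshelve. all: by end_near.
Qed.

Lemma l2norm_le_is_norm : exists2 c : R, 0 < c & forall x, l2norm x <= c * nA x.
Proof.
have [m m0 le_m] := mx_norm_le_is_norm.
exists ((n%:R + 1) / m); first by rewrite divr_gt0 // ltr_wpDl.
move=> x; apply: le_trans (l2norm_le_mx_norm x) _.
rewrite -mulrA (@le_trans _ _ ((n%:R + 1) * `|x|)) //.
  by rewrite ler_wpM2r // lerDl.
by rewrite ler_wpM2l ?addr_ge0 // ler_pdivlMl // mulrC.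
Qed.

End Equivalence.
End NormEquivalence.

Section Restriction.
Variables (R : realType) (n : nat).
Implicit Types (x : 'rV[R]_n) (A B : {set 'I_n}).

Lemma restrict_set0 x : restrict x set0 = 0.
Proof. by apply/rowP => i; rewrite !mxE inE. Qed.

Lemma restrictU x A B : [disjoint A & B] ->
  restrict x (A :|: B) = restrict x A + restrict x B.
Proof.
move=> AB; apply/rowP => i; rewrite !mxE in_setU.
by have [iA|_] := boolP (i \in A); rewrite ?(disjointFr AB iA) ?addr0 ?add0r.
Qed.

Lemma supp_restrict x A : supp (restrict x A) \subset A.
Proof. by apply/subsetP => i; rewrite inE mxE; case: (i \in A); rewrite ?eqxx. Qed.

End Restriction.

Section Decomposable.
Variables (R : realType) (n : nat) (P : {set {set 'I_n}}).
Hypothesis P_partition : partition P [set: 'I_n].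

Definition union_of_groups (A : {set 'I_n}) :=
  exists2 S : {set {set 'I_n}}, S \subset P & A = cover S.

Lemma union_of_groupsU A B :
  union_of_groups A -> union_of_groups B -> union_of_groups (A :|: B).
Proof.
move=> [SA SAP ->] [SB SBP ->]; exists (SA :|: SB); first by rewrite subUset SAP.
by rewrite /cover bigcup_setU.
Qed.

Lemma disjoint_groups_of_cover (SA SB : {set {set 'I_n}}) :
  SA \subset P -> [disjoint cover SA & cover SB] -> [disjoint SA & SB].
Proof.
move=> SAP dis; apply/pred0P => C /=; apply/negP => /andP [CA CB].
have [i iC] : exists i, i \in C.
  case/and3P: P_partition => _ _ P_set0.
  apply/set0Pn; apply: contraNneq P_set0 => <-; exact: subsetP SAP _ CA.
have /(subsetP (bigcup_sup _ CB)) iSB := iC.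
by move: (disjointFr dis (subsetP (bigcup_sup _ CA) _ iC)); rewrite iSB.
Qed.

Variable nA : 'rV[R]_n -> R.
Hypotheses (nA_norm : is_norm nA) (nA_decomposable : decomposable P nA).

Lemma decomposable_restrictU x A B :
  union_of_groups A -> union_of_groups B -> [disjoint A & B] ->
  nA (restrict x (A :|: B)) = nA (restrict x A) + nA (restrict x B).
Proof.
move=> [SA SAP defA] [SB SBP defB] AB; rewrite restrictU //.
apply: (nA_decomposable SAP SBP).
- by apply: disjoint_groups_of_cover SAP _; rewrite -defA -defB.
- by rewrite -defA supp_restrict.
- by rewrite -defB supp_restrict.
Qed.

Lemma decomposable_restrict_bigcup x (Ls : seq {set 'I_n}) :
  (forall j, (j < size Ls)%N -> union_of_groups (nth set0 Ls j)) ->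
  (forall i j, (i < j < size Ls)%N -> [disjoint nth set0 Ls i & nth set0 Ls j]) ->
  union_of_groups (\bigcup_(A <- Ls) A) /\
  nA (restrict x (\bigcup_(A <- Ls) A)) = \sum_(A <- Ls) nA (restrict x A).
Proof.
elim: Ls => [|A Ls IH] groups dis.
  rewrite !big_nil restrict_set0 is_norm0 //; split=> //.
  by exists set0; rewrite ?sub0set // /cover big_set0.
have [groups_Ls add_Ls] := IH (fun j => groups j.+1) (fun i j => dis i.+1 j.+1).
have A_Ls : [disjoint A & \bigcup_(B <- Ls) B].
  rewrite (big_nth set0) big_mkord; apply: bigcup_disjoint => j _.
  by apply: (dis 0 j.+1); rewrite /= ltnS.
have groups_A : union_of_groups A by exact: (groups 0).
rewrite !big_cons decomposable_restrictU ?add_Ls //.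
by split=> //; exact: union_of_groupsU.
Qed.

End Decomposable.

Theorem lemma4p1 (R : realType) (n k : nat) (P : {set {set 'I_n}})
    (nA : 'rV[R]_n -> R) :
  (0 < n)%N -> (0 < k)%N ->
  partition P [set: 'I_n] ->
  (forall B, B \in P -> (#|B| <= k)%N) ->
  is_norm nA -> decomposable P nA ->
  exists2 f : R, 0 < f &
    forall (h : 'rV[R]_n) (L0 : {set 'I_n}) (Ls : seq {set 'I_n}),
      group_sparse P k L0 ->
      optimal_decomp P k nA h L0 Ls ->
      \sum_(1 <= j < size Ls) l2norm (restrict h (nth set0 Ls j))
        <= f^-1 * nA (restrict h (~: L0)).
Proof.
move=> _ _ P_partition _ nA_norm nA_dec.
have [c c_gt0 l2_le] := NormEquivalence.l2norm_le_is_norm nA_norm.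
exists c^-1; first by rewrite invr_gt0.
move=> h L0 Ls _ [sparse disjoint cover_Ls _].
have groups j : (j < size Ls)%N -> union_of_groups P (nth set0 Ls j).
  by case/sparse => -[[S SP ->] _] _; exists S.
have [_ nA_sum] := decomposable_restrict_bigcup P_partition nA_norm nA_dec h groups disjoint.
rewrite invrK -cover_Ls nA_sum (big_nth set0) mulr_sumr.
apply: (@le_trans _ _ (\sum_(1 <= j < size Ls) c * nA (restrict h (nth set0 Ls j)))).
  by apply: ler_sum_nat => j /andP [_ j_lt]; exact: l2_le.
have [->|Ls_gt0] := posnP (size Ls); first by rewrite !big_geq.
by rewrite [leRHS](big_ltn Ls_gt0) lerDr mulr_ge0 ?(ltW c_gt0) ?(is_norm_ge0 nA_norm).
Qed.
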